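(* In the setting described in the context, suppose $c^{l,n},c^{l,n+1}$ ($l=1,\dots,M$), $\psi^{n+1}$, $T^n,T^{n+1}$ satisfy Scheme I with $c^{l,n}_i,c^{l,n+1}_i,T^n_i,T^{n+1}_i>0$ for all $i,l$. Define the discrete entropy $S^m_h=-\sum_{l=1}^M(c^{l,m},\log c^{l,m})+(\log T^m+1,C_T)$ for $m=n,n+1$. Then \[ \frac{S^{n+1}_h-S^n_h}{\Delta t}\ \ge\ \varepsilon\sum_{l=1}^M\Big(\nu^lc^{l,n+1}|\hat{\mathbf u}^{l,n+1}|^2,\frac{1}{T^{n+1}}\Big)-k\sum_{\sigma\in\mathcal E_{int}}\tau_\sigma\,DT^{n+1}_{i,\sigma}\,D\Big(\frac1{T^{n+1}}\Big)_{i,\sigma}\ \ge 0, \] where in the last sum $\sigma=i|j$ with either orientation (the product is orientation-independent).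
   Context: Mesh. $\Omega\subset\mathbb R^d$ is a bounded polygonal/polyhedral domain with $\partial\Omega=\Gamma_D\cup\Gamma_N$, $\Gamma_D\cap\Gamma_N=\emptyset$. A Voronoi finite-volume mesh consists of points $\mathbf x_1,\dots,\mathbf x_N$ and control volumes $V_i=\{\mathbf y\in\Omega:|\mathbf y-\mathbf x_i|<|\mathbf y-\mathbf x_j|\ \forall j\ne i\}$. An interior face is $\sigma=\partial V_i\cap\partial V_j$ of positive $(d-1)$-measure, written $\sigma=i|j$; $\mathcal E_{int}$ is the set of interior faces and $\mathcal E_{i,int}$ those of $V_i$; $\mathcal E^D_{i,ext}$, $\mathcal E^N_{i,ext}$ are the faces of $\partial V_i$ lying in $\Gamma_D$, resp. $\Gamma_N$. $\mathrm m(\cdot)$ is Lebesgue measure (in dimension $d$ or $d-1$); $d_\sigma=|\mathbf x_i-\mathbf x_j|$ for $\sigma=i|j$ and $d_\sigma=\mathrm{dist}(\mathbf x_i,\sigma)$ for exterior faces of $V_i$; $\tau_\sigma=\mathrm m(\sigma)/d_\sigma$. Grid functions are vectors $u=(u_1,\dots,u_N)\in\mathbb R^N$; for $\sigma=i|j$, $Du_{i,\sigma}=u_j-u_i$. For positive $u$ and $\sigma=i|j$, $\mathcal A_\sigma u=\frac{(\mathrm m(V_i)+\mathrm m(V_j))u_iu_j}{\mathrm m(V_i)u_j+\mathrm m(V_j)u_i}$ (harmonic average). The discrete inner product is $(f,g)=\sum_{i=1}^N\mathrm m(V_i)f_ig_i$; products, quotients and logarithms of grid functions are taken componentwise. Scheme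 I. Parameters: $\varepsilon>0$, $k>0$, $C_T>0$, $\Delta t>0$, $\nu^l>0$, $z^l\in\mathbb R$ ($l=1,\dots,M$), a grid function $\rho^f$, Dirichlet data $\psi^D_\sigma$ on $\Gamma_D$-faces and Neumann data $g_\sigma$ on $\Gamma_N$-faces. Given $c^{l,n}$ (positive), $T^n$, the unknowns $c^{l,n+1}$ (positive), $\psi^{n+1}$, $T^{n+1}$ satisfy, for $i=1,\dots,N$: (i) $\frac{c^{l,n+1}_i-c^{l,n}_i}{\Delta t}+\frac{\varepsilon}{\mathrm m(V_i)}\sum_{\sigma\in\mathcal E_{i,int}}\mathrm m(\sigma)F^l_{i,\sigma}=0$, where for $\sigma=i|j$ \[F^l_{i,\sigma}=-\frac{1}{\nu^l d_\sigma}\Big[\mathcal A_\sigma(c^{l,n})\,D\big(\log c^{l,n+1}+z^l\psi^{n+1}\big)_{i,\sigma}+D\big(c^{l,n}(T^n-1)\big)_{i,\sigma}\Big]\] (so $F^l_{j,\sigma}=-F^l_{i,\sigma}$), and the flux through exterior faces is zero (zero-flux boundary condition); (ii) $-\frac{\varepsilon^2}{\mathrm m(V_i)}\Big[\sum_{\sigma\in\mathcal E_{i,int}}\tau_\sigma D\psi^{n+1}_{i,\sigma}+\sum_{\sigma\in\mathcal E^D_{i,ext}}\tau_\sigma(\psi^D_\sigma-\psi^{n+1}_i)\Big]-\frac{1}{\mathrm m(V_i)}\sum_{\sigma\in\mathcal E^N_{i,ext}}\mathrm m(\sigma)g_\sigma=\sum_{l=1}^Mz^lc^{l,n+1}_i+\rho^f_i$;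 (iii) $C_T\frac{T^{n+1}_i-T^n_i}{\Delta t}=\frac{k}{\mathrm m(V_i)}\sum_{\sigma\in\mathcal E_{i,int}}\tau_\sigma DT^{n+1}_{i,\sigma}+T^{n+1}_iP^{n+1}_i+\varepsilon\sum_{l=1}^M\nu^lc^{l,n+1}_i|\hat{\mathbf u}^{l,n+1}_i|^2$ (thermally insulated boundary: no exterior-face terms), where \[P^{n+1}_i=\sum_{l=1}^M\Big[\frac{\varepsilon}{\mathrm m(V_i)}\sum_{\sigma\in\mathcal E_{i,int}}\mathrm m(\sigma)F^l_{i,\sigma}\lambda^l_\sigma+(1+\log c^{l,n+1}_i)\frac{c^{l,n+1}_i-c^{l,n}_i}{\Delta t}\Big],\] $\lambda^l_\sigma$ is a face value of $\log c^{l,n+1}$ depending only on $\sigma$ (the same from both sides), and $\hat{\mathbf u}^{l,n+1}_i\in\mathbb R^d$ are given cell-wise velocity reconstructions computed from $c^{l,n+1},\psi^{n+1},T^n$; $|\hat{\mathbf u}^{l,n+1}|^2$ denotes the grid function $i\mapsto|\hat{\mathbf u}^{l,n+1}_i|^2$. *)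

From HB Require Import structures.
From mathcomp Require Import all_boot all_order all_algebra.
From mathcomp Require Import all_classical all_reals.
From mathcomp Require Import exp.
Import Order.TTheory GRing.Theory Num.Theory.
Local Open Scope ring_scope.

(* Cells are indexed by 'I_ncell.  Interior faces sigma = i|j are      *)
(* encoded by the symmetric, irreflexive adjacency relation [adj];    *)
(* an interior face is the unordered pair {i,j} with adj i j.         *)
(* Exterior faces are indexed by 'I_nxface, each belonging to one cell  *)
(* [xowner] and lying either on Gamma_D ([xdir] = true) or Gamma_N.   *)
Record mesh (R : realType) (d : nat) := Mesh {
  ncell : nat;
  pt    : 'I_ncell -> 'rV[R]_d;          (* Voronoi generators x_i     *)
  vol   : 'I_ncell -> R;
  adj   : 'I_ncell -> 'I_ncell -> bool;
  fmeas : 'I_ncell -> 'I_ncell -> R;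
  nxface  : nat;
  xowner : 'I_nxface -> 'I_ncell;
  xdir   : 'I_nxface -> bool;
  xmeas  : 'I_nxface -> R;
  xdist  : 'I_nxface -> R
}.
Arguments ncell {R d}. Arguments pt {R d}. Arguments vol {R d}.
Arguments adj {R d}. Arguments fmeas {R d}. Arguments nxface {R d}.
Arguments xowner {R d}. Arguments xdir {R d}. Arguments xmeas {R d}.
Arguments xdist {R d}.

Definition eucl (R : realType) (d : nat) (x y : 'rV[R]_d) : R :=
  Num.sqrt (\sum_(k < d) (x 0 k - y 0 k) ^+ 2).

Definition sqnorm (R : realType) (d : nat) (x : 'rV[R]_d) : R :=
  \sum_(k < d) (x 0 k) ^+ 2.

Arguments eucl {R d}. Arguments sqnorm {R d}.

Section MeshDefs.
Variables (R : realType) (d : nat) (m : mesh R d).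
Local Notation N := (ncell m).
Local Notation cell := 'I_(ncell m).
Local Notation grid := (cell -> R).

Definition mesh_ok : Prop :=
  injective (pt m)
  /\ (forall i, 0 < vol m i)
  /\ (forall i j, adj m i j = adj m j i)
  /\ (forall i, ~~ adj m i i)
  /\ (forall i j, fmeas m i j = fmeas m j i)
  /\ (forall i j, adj m i j -> 0 < fmeas m i j)
  /\ (forall s, 0 < xmeas m s)
  /\ (forall s, 0 < xdist m s).

Definition dint (i j : cell) : R := eucl (pt m i) (pt m j).
Definition tauint (i j : cell) : R := fmeas m i j / dint i j.
Definition tauext (s : 'I_(nxface m)) : R := xmeas m s / xdist m s.

Definition Dg (u : grid) (i j : cell) : R := u j - u i.

Definition harm (u : grid) (i j : cell) : R :=
  (vol m i + vol m j) * u i * u j / (vol m i * u j + vol m j * u i).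

Definition dinner (f g : grid) : R := \sum_(i < N) vol m i * f i * g i.

Definition lng (u : grid) : grid := fun i => ln (u i).

Definition entropy (M : nat) (CT : R) (c : 'I_M -> grid) (T : grid) : R :=
  - (\sum_(l < M) dinner (c l) (lng (c l)))
  + dinner (fun i => ln (T i) + 1) (fun _ => CT).

Definition flux (nu z : R) (cn cn1 : grid) (psi1 Tn : grid) (i j : cell) : R :=
  - (1 / (nu * dint i j)) *
    (harm cn i j * Dg (fun k => ln (cn1 k) + z * psi1 k) i j
     + Dg (fun k => cn k * (Tn k - 1)) i j).

End MeshDefs.

Arguments mesh_ok {R d}. Arguments dint {R d}. Arguments tauint {R d}.
Arguments tauext {R d}. Arguments Dg {R d}. Arguments harm {R d}.
Arguments dinner {R d}. Arguments lng {R d}. Arguments entropy {R d} m {M}.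
Arguments flux {R d}.

Definition schemeI {R : realType} {d : nat} (m : mesh R d) {M : nat}
  (eps k CT dt : R) (nu z : 'I_M -> R) (rhof : 'I_(ncell m) -> R)
  (psiD g : 'I_(nxface m) -> R)
  (lam : 'I_M -> 'I_(ncell m) -> 'I_(ncell m) -> R)
  (uhat : 'I_M -> 'I_(ncell m) -> 'rV[R]_d)
  (cn cn1 : 'I_M -> 'I_(ncell m) -> R) (psi1 Tn Tn1 : 'I_(ncell m) -> R) : Prop :=
  let F l i j := flux m (nu l) (z l) (cn l) (cn1 l) psi1 Tn i j in
  (* (i) mass balance, zero flux through exterior faces *)
  (forall (l : 'I_M) (i : 'I_(ncell m)),
     (cn1 l i - cn l i) / dt
     + eps / vol m i * (\sum_(j < ncell m | adj m i j) fmeas m i j * F l i j) = 0)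
  /\ (forall i : 'I_(ncell m),
     - (eps ^+ 2 / vol m i) *
        ((\sum_(j < ncell m | adj m i j) tauint m i j * Dg m psi1 i j)
         + \sum_(s < nxface m | (xowner m s == i) && xdir m s)
              tauext m s * (psiD s - psi1 i))
     - 1 / vol m i * (\sum_(s < nxface m | (xowner m s == i) && ~~ xdir m s)
              xmeas m s * g s)
     = \sum_(l < M) z l * cn1 l i + rhof i)
  (* (iii) temperature equation, thermally insulated boundary *)
  /\ (forall i : 'I_(ncell m),
     let P := \sum_(l < M)
        (eps / vol m i * (\sum_(j < ncell m | adj m i j)
                             fmeas m i j * F l i j * lam l i j)
         + (1 + ln (cn1 l i)) * ((cn1 l i - cn l i) / dt)) in
     CT * ((Tn1 i - Tn i) / dt)
     = k / vol m i * (\sum_(j < ncell m | adj m i j) tauint m i j * Dg m Tn1 i j)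
       + Tn1 i * P
       + eps * \sum_(l < M) nu l * cn1 l i * sqnorm (uhat l i)).

(* Multiply the temperature equation (iii) by m(V_i)/T_i^{n+1} and sum over the cells.
   The flux terms of P^{n+1} cancel pairwise because F^l is antisymmetric and lambda^l symmetric, the
   heat-conduction term becomes minus a sum of tau_sigma DT D(1/T) <= 0 by discrete summation by parts,
   and the remaining time differences are bounded by the entropy increment using the tangent-line
   inequalities of the concave function ln and of the convex function x ln x. *)
From HB Require Import structures.
From mathcomp Require Import all_boot all_order all_algebra.
From mathcomp Require Import all_classical all_reals.
From mathcomp Require Import exp ring lra.
Import Order.TTheory GRing.Theory Num.Theory.
Local Open Scope ring_scope.

Set Implicit Arguments.
Unset Strict Implicit.

Section LnTangents.
Variable R : realType.

Lemma ln_tangent_le (x y : R) : 0 < x -> 0 < y -> ln x <= ln y + (x - y) / y.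
Proof.
move=> x0 y0.
have xy0 : 0 < x / y by rewrite divr_gt0.
have h : ln (x / y) <= x / y - 1.
  by have := @le_ln1Dx R (x / y - 1); rewrite addrCA subrr addr0; apply; lra.
rewrite ln_div ?posrE // in h.
have -> : (x - y) / y = x / y - 1 by field; rewrite gt_eqF.
lra.
Qed.

Lemma xlnx_tangent_le (x y : R) : 0 < x -> 0 < y ->
  y * ln y + (1 + ln y) * (x - y) <= x * ln x.
Proof.
move=> x0 y0; have := ler_wpM2l (ltW x0) (ln_tangent_le y0 x0).
have -> : x * (ln x + (y - x) / x) = x * ln x + (y - x) by field; rewrite gt_eqF.
lra.
Qed.

Lemma subr_mul_subr_inv_le0 (a b : R) : 0 < a -> 0 < b -> (b - a) * (1 / b - 1 / a) <= 0.
Proof.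
move=> a0 b0.
have -> : (b - a) * (1 / b - 1 / a) = - ((b - a) ^+ 2 / (a * b)) by field; rewrite !gt_eqF.
by rewrite oppr_le0 divr_ge0 ?sqr_ge0 // ltW // mulr_gt0.
Qed.

End LnTangents.

Section AdjacencySums.
Variables (R : comPzRingType) (n : nat) (a : rel 'I_n).
Hypotheses (aC : symmetric a) (a_irr : irreflexive a).

Lemma sum_rel_pairs (h : 'I_n -> 'I_n -> R) :
  \sum_(i < n) \sum_(j < n | a i j) h i j
  = \sum_(i < n) \sum_(j < n | (i < j)%N && a i j) (h i j + h j i).
Proof.
under eq_bigr => i _ do rewrite (bigID (fun j : 'I_n => (i < j)%N)) /=.
under [RHS]eq_bigr => i _ do rewrite big_split /=.
rewrite big_split [RHS]big_split /=; congr (_ + _).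
  by apply: eq_bigr => i _; apply: eq_bigl => j; rewrite andbC.
under eq_bigr => i _ do rewrite big_mkcond /=.
rewrite exchange_big; apply: eq_bigr => i _; rewrite [RHS]big_mkcond.
apply: eq_bigr => j _; rewrite (aC j i).
by case: (ltngtP i j) => [_|_|/val_inj ->]; rewrite ?andbT ?andbF ?a_irr.
Qed.

Lemma sum_rel_antisym_eq0 (h : 'I_n -> 'I_n -> R) :
  (forall i j, h j i = - h i j) -> \sum_(i < n) \sum_(j < n | a i j) h i j = 0.
Proof.
move=> hN; rewrite sum_rel_pairs big1 // => i _.
by rewrite big1 // => j _; rewrite (hN i j) subrr.
Qed.

Lemma sum_rel_by_parts (tau : 'I_n -> 'I_n -> R) (u v : 'I_n -> R) :
  (forall i j, tau i j = tau j i) ->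
  \sum_(i < n) \sum_(j < n | a i j) tau i j * (u j - u i) * v i
  = - \sum_(i < n) \sum_(j < n | (i < j)%N && a i j) tau i j * (u j - u i) * (v j - v i).
Proof.
move=> tauC; rewrite sum_rel_pairs -sumrN; apply: eq_bigr => i _.
by rewrite -sumrN; apply: eq_bigr => j _; rewrite (tauC j i); ring.
Qed.

End AdjacencySums.

Section MeshFacts.
Variables (R : realType) (d : nat) (m : mesh R d).
Hypothesis mesh_okm : mesh_ok m.

Lemma vol_gt0 i : 0 < vol m i.
Proof. by case: mesh_okm => _ []. Qed.

Lemma dintC i j : dint m i j = dint m j i.
Proof.
by rewrite /dint /eucl; congr Num.sqrt; apply: eq_bigr => q _; rewrite -sqrrN opprB.
Qed.

Lemma harmC (u : 'I_(ncell m) -> R) i j : harm m u i j = harm m u j i.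
Proof. by rewrite /harm; congr (_ / _); ring. Qed.

Lemma fluxC nu z cn cn1 psi1 Tn i j :
  flux m nu z cn cn1 psi1 Tn j i = - flux m nu z cn cn1 psi1 Tn i j.
Proof. by rewrite /flux /Dg dintC harmC; ring. Qed.

Lemma tauintC i j : tauint m i j = tauint m j i.
Proof. by have [_ [_ [_ [_ [fmC _]]]]] := mesh_okm; rewrite /tauint dintC fmC. Qed.

Lemma tauint_ge0 i j : adj m i j -> 0 <= tauint m i j.
Proof.
have [_ [_ [_ [_ [_ [fm0 _]]]]]] := mesh_okm.
by move=> aij; apply: divr_ge0; [exact: ltW (fm0 _ _ aij) | exact: sqrtr_ge0].
Qed.

End MeshFacts.

Section Entropy.
Variables (R : realType) (d : nat) (m : mesh R d) (M : nat) (CT : R).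
Local Notation grid := ('I_(ncell m) -> R).

Lemma entropyE (c : 'I_M -> grid) (T : grid) :
  entropy m CT c T
  = \sum_(i < ncell m) vol m i * (CT * (ln (T i) + 1) - \sum_(l < M) c l i * ln (c l i)).
Proof.
rewrite /entropy /dinner /lng exchange_big -sumrN -big_split /=.
apply: eq_bigr => i _; rewrite mulrBr mulr_sumr addrC; congr (_ - _); first ring.
by apply: eq_bigr => l _; rewrite mulrA.
Qed.

Lemma entropy_sub_ge (c0 c1 : 'I_M -> grid) (T0 T1 : grid) :
  (forall i, 0 < vol m i) -> 0 <= CT ->
  (forall l i, 0 < c0 l i) -> (forall l i, 0 < c1 l i) ->
  (forall i, 0 < T0 i) -> (forall i, 0 < T1 i) ->
  \sum_(i < ncell m) vol m i * (CT * ((T1 i - T0 i) / T1 i)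
                                - \sum_(l < M) (1 + ln (c1 l i)) * (c1 l i - c0 l i))
  <= entropy m CT c1 T1 - entropy m CT c0 T0.
Proof.
move=> vol0 CT0 c00 c10 T00 T10; rewrite !entropyE -sumrB.
apply: ler_sum => i _; rewrite -mulrBr ler_pM2l //.
have hT : CT * ((T1 i - T0 i) / T1 i) <= CT * (ln (T1 i) + 1) - CT * (ln (T0 i) + 1).
  by rewrite -mulrBr; apply: ler_wpM2l => //; have := ln_tangent_le (T00 i) (T10 i); lra.
have hc : \sum_(l < M) c1 l i * ln (c1 l i) - \sum_(l < M) c0 l i * ln (c0 l i)
          <= \sum_(l < M) (1 + ln (c1 l i)) * (c1 l i - c0 l i).
  rewrite -sumrB; apply: ler_sum => l _.
  by have := xlnx_tangent_le (c00 l i) (c10 l i); lra.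
lra.
Qed.

End Entropy.

Section SchemeI.
Variables (R : realType) (d : nat) (m : mesh R d) (M : nat).
Variables (eps k CT dt : R) (nu z : 'I_M -> R) (rhof : 'I_(ncell m) -> R).
Variables (psiD g : 'I_(nxface m) -> R) (lam : 'I_M -> 'I_(ncell m) -> 'I_(ncell m) -> R).
Variables (uhat : 'I_M -> 'I_(ncell m) -> 'rV[R]_d) (cn cn1 : 'I_M -> 'I_(ncell m) -> R).
Variables (psi1 Tn Tn1 : 'I_(ncell m) -> R).
Hypothesis mesh_okm : mesh_ok m.
Hypothesis scheme : schemeI m eps k CT dt nu z rhof psiD g lam uhat cn cn1 psi1 Tn Tn1.

Local Notation F l := (flux m (nu l) (z l) (cn l) (cn1 l) psi1 Tn).
Local Notation vol := (vol m).

Lemma flux_exchange_eq0 l : (forall i j, lam l i j = lam l j i) ->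
  \sum_(i < ncell m) \sum_(j < ncell m | adj m i j) fmeas m i j * F l i j * lam l i j = 0.
Proof.
case: mesh_okm => _ [_ [adjC [adj_irr [fmC _]]]] lamC.
apply: sum_rel_antisym_eq0 => [i j | i | i j]; first exact: adjC.
  exact: negbTE.
by rewrite fluxC fmC lamC mulrN mulNr.
Qed.

Lemma cell_entropy_balance i : 0 < dt -> 0 < Tn1 i ->
  vol i * (CT * ((Tn1 i - Tn i) / Tn1 i)
           - \sum_(l < M) (1 + ln (cn1 l i)) * (cn1 l i - cn l i)) / dt
  = k * \sum_(j < ncell m | adj m i j) tauint m i j * Dg m Tn1 i j * (1 / Tn1 i)
    + eps * \sum_(l < M) \sum_(j < ncell m | adj m i j) fmeas m i j * F l i j * lam l i j
    + eps * (vol i * (\sum_(l < M) nu l * cn1 l i * sqnorm (uhat l i)) * (1 / Tn1 i)).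
Proof.
move=> dt0 T0; have V0 := vol_gt0 mesh_okm i.
case: scheme => _ [_ /(_ i) /=]; rewrite big_split /= -mulr_sumr => temp_eq.
have -> : CT * ((Tn1 i - Tn i) / Tn1 i) = dt / Tn1 i * (CT * ((Tn1 i - Tn i) / dt)).
  by field; rewrite !gt_eqF.
have -> : \sum_(l < M) (1 + ln (cn1 l i)) * (cn1 l i - cn l i)
          = dt * \sum_(l < M) (1 + ln (cn1 l i)) * ((cn1 l i - cn l i) / dt).
  by rewrite mulr_sumr; apply: eq_bigr => l _; field; rewrite gt_eqF.
by rewrite -mulr_suml temp_eq; field; rewrite !gt_eqF.
Qed.

Lemma entropy_production_eq : 0 < dt -> (forall i, 0 < Tn1 i) ->
  (forall l i j, lam l i j = lam l j i) ->
  (\sum_(i < ncell m) vol i * (CT * ((Tn1 i - Tn i) / Tn1 i)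
                     - \sum_(l < M) (1 + ln (cn1 l i)) * (cn1 l i - cn l i))) / dt
  = eps * (\sum_(l < M) dinner m (fun i => nu l * cn1 l i * sqnorm (uhat l i))
                                 (fun i => 1 / Tn1 i))
    - k * (\sum_(i < ncell m) \sum_(j < ncell m | (i < j)%N && adj m i j)
             tauint m i j * Dg m Tn1 i j * Dg m (fun q => 1 / Tn1 q) i j).
Proof.
move=> dt0 T0 lamC; have [_ [_ [adjC [adj_irr _]]]] := mesh_okm.
rewrite mulr_suml; under eq_bigr => i _ do rewrite cell_entropy_balance //.
rewrite !big_split /= -!mulr_sumr.
have -> : \sum_(i < ncell m) \sum_(j < ncell m | adj m i j)
            tauint m i j * Dg m Tn1 i j * (1 / Tn1 i)
          = - \sum_(i < ncell m) \sum_(j < ncell m | (i < j)%N && adj m i j)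
              tauint m i j * Dg m Tn1 i j * Dg m (fun q => 1 / Tn1 q) i j.
  apply: (sum_rel_by_parts adjC) => [i | i j]; [exact: negbTE | exact: (tauintC mesh_okm i j)].
have -> : \sum_(i < ncell m) \sum_(l < M) \sum_(j < ncell m | adj m i j)
            fmeas m i j * F l i j * lam l i j = 0.
  by rewrite exchange_big big1 // => l _; apply: flux_exchange_eq0.
have -> : \sum_(i < ncell m) vol i * (\sum_(l < M) nu l * cn1 l i * sqnorm (uhat l i))
            * (1 / Tn1 i)
          = \sum_(l < M) dinner m (fun i => nu l * cn1 l i * sqnorm (uhat l i))
                                  (fun i => 1 / Tn1 i).
  rewrite /dinner exchange_big; apply: eq_bigr => i _.
  by rewrite mulr_sumr mulr_suml; apply: eq_bigr => l _; ring.
by rewrite mulr0 mulrN; ring.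
Qed.

Lemma entropy_production_ge0 : 0 <= eps -> 0 <= k -> (forall l, 0 <= nu l) ->
  (forall l i, 0 <= cn1 l i) -> (forall i, 0 < Tn1 i) ->
  0 <= eps * (\sum_(l < M) dinner m (fun i => nu l * cn1 l i * sqnorm (uhat l i))
                                   (fun i => 1 / Tn1 i))
       - k * (\sum_(i < ncell m) \sum_(j < ncell m | (i < j)%N && adj m i j)
                tauint m i j * Dg m Tn1 i j * Dg m (fun q => 1 / Tn1 q) i j).
Proof.
move=> eps0 k0 nu0 c0 T0.
have kinetic : 0 <= \sum_(l < M) dinner m (fun i => nu l * cn1 l i * sqnorm (uhat l i))
                                          (fun i => 1 / Tn1 i).
  apply: sumr_ge0 => l _; apply: sumr_ge0 => i _.
  have sq0 : 0 <= sqnorm (uhat l i) by apply: sumr_ge0 => q _; apply: sqr_ge0.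
  apply: mulr_ge0; last exact: divr_ge0 ler01 (ltW (T0 i)).
  by apply: mulr_ge0 (ltW (vol_gt0 mesh_okm i)) (mulr_ge0 (mulr_ge0 (nu0 l) (c0 l i)) sq0).
have thermal : \sum_(i < ncell m) \sum_(j < ncell m | (i < j)%N && adj m i j)
                 tauint m i j * Dg m Tn1 i j * Dg m (fun q => 1 / Tn1 q) i j <= 0.
  apply: sumr_le0 => i _; apply: sumr_le0 => j /andP[_ aij].
  by rewrite -mulrA mulr_ge0_le0 ?(tauint_ge0 mesh_okm) ?subr_mul_subr_inv_le0.
by rewrite subr_ge0 (le_trans (mulr_ge0_le0 k0 thermal)) ?mulr_ge0.
Qed.

End SchemeI.

Theorem theorem3p3 (R : realType) (d : nat) (m : mesh R d) (M : nat)
  (eps k CT dt : R) (nu z : 'I_M -> R) (rhof : 'I_(ncell m) -> R)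
  (psiD g : 'I_(nxface m) -> R)
  (lam : 'I_M -> 'I_(ncell m) -> 'I_(ncell m) -> R)
  (uhat : 'I_M -> 'I_(ncell m) -> 'rV[R]_d)
  (cn cn1 : 'I_M -> 'I_(ncell m) -> R) (psi1 Tn Tn1 : 'I_(ncell m) -> R) :
  mesh_ok m ->
  0 < eps -> 0 < k -> 0 < CT -> 0 < dt -> (forall l, 0 < nu l) ->
  (forall l i j, lam l i j = lam l j i) ->
  (forall l i, 0 < cn l i) -> (forall l i, 0 < cn1 l i) ->
  (forall i, 0 < Tn i) -> (forall i, 0 < Tn1 i) ->
  schemeI m eps k CT dt nu z rhof psiD g lam uhat cn cn1 psi1 Tn Tn1 ->
  let S0 := entropy m CT cn Tn in
  let S1 := entropy m CT cn1 Tn1 in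
  let rhs := eps * (\sum_(l < M) dinner m
                      (fun i => nu l * cn1 l i * sqnorm (uhat l i))
                      (fun i => 1 / Tn1 i))
             - k * (\sum_(i < ncell m) \sum_(j < ncell m | (i < j)%N && adj m i j)
                      tauint m i j * Dg m Tn1 i j * Dg m (fun q => 1 / Tn1 q) i j) in
  (S1 - S0) / dt >= rhs /\ rhs >= 0.
Proof.
move=> mesh_okm eps0 k0 CT0 dt0 nu0 lamC c0 c1 T0 T1 scheme S0 S1 rhs; split.
  rewrite /rhs -(entropy_production_eq mesh_okm scheme) //.
  apply: ler_wpM2r; first by rewrite invr_ge0 ltW.
  exact: entropy_sub_ge (vol_gt0 mesh_okm) (ltW CT0) c0 c1 T0 T1.
by apply: entropy_production_ge0 mesh_okm (ltW eps0) (ltW k0) _ _ T1 => [l | l i];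
  apply: ltW.
Qed.
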